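(* Let $\mathcal C$ be an additive category and $\mathbb E\colon\mathcal C^{\mathrm{op}}\times\mathcal C\to\mathsf{Ab}$ a biadditive functor. Let $\alpha\in\mathbb E(C,A)$ and let $(e_A,e_C)\in\mathrm{End}_{\mathbb E\text{-}\mathrm{Ext}(\mathcal C)}(\alpha)$ be an idempotent. Then $e_A$ and $e_C$ split in $\mathcal C$ if and only if $(e_A,e_C)$ splits in $\mathbb E\text{-}\mathrm{Ext}(\mathcal C)$. In particular, if $\mathcal C$ is idempotent complete then so is $\mathbb E\text{-}\mathrm{Ext}(\mathcal C)$.
   Context: An idempotent $e\colon X\to X$ splits if there are $r\colon X\to Y$, $s\colon Y\to X$ with $sr=e$, $rs=1_Y$; a category is idempotent complete if every idempotent splits. Write $a_*\alpha=\mathbb E(C,a)(\alpha)$ and $c^*\beta=\mathbb E(c,A)(\beta)$. The category of extensions $\mathbb E\text{-}\mathrm{Ext}(\mathcal C)$ has as objects all elements $\alpha\in\mathbb E(C,A)$ for $A,C\in\mathcal C$; a morphism from $\alpha\in\mathbb E(C,A)$ to $\beta\in\mathbb E(D,B)$ is a pair $(a,c)$ of morphisms $a\colon A\to B$, $c\colon C\to D$ in $\mathcal C$ with $a_*\alpha=c^*\beta$; composition is componentwise and the identity of $\alpha$ is $(1_A,1_C)$. (A morphism $(e_A,e_C)\colon\alpha\to\alpha$ is idempotent iff $e_A$ and $e_C$ are idempotents in $\mathcal C$.) *)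

From HB Require Import structures.
From mathcomp Require Import all_boot all_algebra.
Set Implicit Arguments. Unset Strict Implicit. Unset Printing Implicit Defensive.
Import GRing.Theory.
Local Open Scope ring_scope.

Record AddCat := {
  Cob : Type;
  Chom : Cob -> Cob -> zmodType;
  ccomp : forall X Y Z : Cob, Chom Y Z -> Chom X Y -> Chom X Z;
  cid : forall X : Cob, Chom X X;
  comp_assoc : forall (W X Y Z : Cob) (h : Chom Y Z) (g : Chom X Y) (f : Chom W X),
      ccomp h (ccomp g f) = ccomp (ccomp h g) f;
  comp_id_l : forall (X Y : Cob) (f : Chom X Y), ccomp (cid Y) f = f;
  comp_id_r : forall (X Y : Cob) (f : Chom X Y), ccomp f (cid X) = f;
  comp_addl : forall (X Y Z : Cob) (g1 g2 : Chom Y Z) (f : Chom X Y),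
      ccomp (g1 + g2) f = ccomp g1 f + ccomp g2 f;
  comp_addr : forall (X Y Z : Cob) (g : Chom Y Z) (f1 f2 : Chom X Y),
      ccomp g (f1 + f2) = ccomp g f1 + ccomp g f2;
  zero_ob : Cob;
  zero_ob_in : forall (X : Cob) (f : Chom X zero_ob), f = 0;
  zero_ob_out : forall (X : Cob) (f : Chom zero_ob X), f = 0;
  biprod : Cob -> Cob -> Cob;
  bp_inl : forall X Y : Cob, Chom X (biprod X Y);
  bp_inr : forall X Y : Cob, Chom Y (biprod X Y);
  bp_pl : forall X Y : Cob, Chom (biprod X Y) X;
  bp_pr : forall X Y : Cob, Chom (biprod X Y) Y;
  bp_pl_inl : forall X Y : Cob, ccomp (bp_pl X Y) (bp_inl X Y) = cid X;
  bp_pr_inr : forall X Y : Cob, ccomp (bp_pr X Y) (bp_inr X Y) = cid Y;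
  bp_pl_inr : forall X Y : Cob, ccomp (bp_pl X Y) (bp_inr X Y) = 0;
  bp_pr_inl : forall X Y : Cob, ccomp (bp_pr X Y) (bp_inl X Y) = 0;
  bp_sum : forall X Y : Cob,
      ccomp (bp_inl X Y) (bp_pl X Y) + ccomp (bp_inr X Y) (bp_pr X Y)
      = cid (biprod X Y)
}.

Arguments ccomp {_ _ _ _}.
Arguments cid {_}.

(* Biadditive functor E : C^op x C -> Ab.  E C A is an abelian group;
   epull c = c^* = E(c, A) : E(D,A) -> E(C,A) for c : C -> D;
   epush a = a_* = E(C, a) : E(C,A) -> E(C,B) for a : A -> B. *)
Record BiaddFunctor (C : AddCat) := {
  Eobj : Cob C -> Cob C -> zmodType;
  epull : forall (X Y A : Cob C), Chom X Y -> Eobj Y A -> Eobj X A;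
  epush : forall (X A B : Cob C), Chom A B -> Eobj X A -> Eobj X B;
  pull_add : forall (X Y A : Cob C) (c : Chom X Y) (u v : Eobj Y A),
      epull c (u + v) = epull c u + epull c v;
  push_add : forall (X A B : Cob C) (a : Chom A B) (u v : Eobj X A),
      epush a (u + v) = epush a u + epush a v;
  pull_id : forall (X A : Cob C) (u : Eobj X A), epull (cid X) u = u;
  push_id : forall (X A : Cob C) (u : Eobj X A), epush (cid A) u = u;
  pull_comp : forall (X Y Z A : Cob C) (g : Chom Y Z) (f : Chom X Y) (u : Eobj Z A),
      epull (ccomp g f) u = epull f (epull g u);
  push_comp : forall (X A B B' : Cob C) (g : Chom B B') (f : Chom A B) (u : Eobj X A),
      epush (ccomp g f) u = epush g (epush f u);
  push_pull : forall (X Y A B : Cob C) (a : Chom A B) (c : Chom X Y) (u : Eobj Y A),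
      epush a (epull c u) = epull c (epush a u);
  pull_addm : forall (X Y A : Cob C) (c1 c2 : Chom X Y) (u : Eobj Y A),
      epull (c1 + c2) u = epull c1 u + epull c2 u;
  push_addm : forall (X A B : Cob C) (a1 a2 : Chom A B) (u : Eobj X A),
      epush (a1 + a2) u = epush a1 u + epush a2 u
}.

Arguments Eobj {_}.
Arguments epull {_} _ {_ _ _}.
Arguments epush {_} _ {_ _ _}.

Section Defs.
Variables (C : AddCat) (E : BiaddFunctor C).

Definition idempotent (X : Cob C) (e : Chom X X) : Prop := ccomp e e = e.

Definition splits (X : Cob C) (e : Chom X X) : Prop :=
  exists (Y : Cob C) (r : Chom X Y) (s : Chom Y X), ccomp s r = e /\ ccomp r s = cid Y.

Definition idempotent_complete : Prop :=
  forall (X : Cob C) (e : Chom X X), idempotent e -> splits e.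

Definition ext_mor (X A Y B : Cob C) (alpha : Eobj E X A) (beta : Eobj E Y B)
  (a : Chom A B) (c : Chom X Y) : Prop :=
  epush E a alpha = epull E c beta.

Definition ext_idempotent (X A : Cob C) (alpha : Eobj E X A)
  (eA : Chom A A) (eC : Chom X X) : Prop :=
  ext_mor alpha alpha eA eC /\ ccomp eA eA = eA /\ ccomp eC eC = eC.

Definition ext_splits (X A : Cob C) (alpha : Eobj E X A)
  (eA : Chom A A) (eC : Chom X X) : Prop :=
  exists (Y B : Cob C) (beta : Eobj E Y B)
         (rA : Chom A B) (rC : Chom X Y) (sA : Chom B A) (sC : Chom Y X),
    [/\ ext_mor alpha beta rA rC, ext_mor beta alpha sA sC,
        ccomp sA rA = eA /\ ccomp sC rC = eC &
        ccomp rA sA = cid B /\ ccomp rC sC = cid Y].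

Definition ext_idempotent_complete : Prop :=
  forall (X A : Cob C) (alpha : Eobj E X A) (eA : Chom A A) (eC : Chom X X),
    ext_idempotent alpha eA eC -> ext_splits alpha eA eC.

End Defs.

From mathcomp Require Import all_boot all_algebra.

Set Implicit Arguments.
Unset Strict Implicit.
Unset Printing Implicit Defensive.

(* If e_A = s_A r_A and e_C = s_C r_C are splittings in C, the image of the
   idempotent is the extension beta = (r_A)_* (s_C)^* alpha: the identity
   (e_A)_* alpha = (e_C)^* alpha makes (r_A, r_C) : alpha -> beta and
   (s_A, s_C) : beta -> alpha morphisms of extensions. *)

Section ExtSplitting.
Variables (C : AddCat) (E : BiaddFunctor C).
Variables (X A Y B : Cob C) (alpha : Eobj E X A) (eA : Chom A A) (eC : Chom X X).
Variables (rA : Chom A B) (sA : Chom B A) (rC : Chom X Y) (sC : Chom Y X).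
Hypothesis alpha_e : ext_mor alpha alpha eA eC.
Hypotheses (sArA : ccomp sA rA = eA) (sCrC : ccomp sC rC = eC).

Let beta := epush E rA (epull E sC alpha).

Lemma ext_mor_retraction : ccomp rA sA = cid B -> ext_mor alpha beta rA rC.
Proof.
move=> rAsA; rewrite /ext_mor /beta -push_pull -pull_comp sCrC -alpha_e.
by rewrite -push_comp -sArA comp_assoc rAsA comp_id_l.
Qed.

Lemma ext_mor_section : ccomp rC sC = cid Y -> ext_mor beta alpha sA sC.
Proof.
move=> rCsC; rewrite /ext_mor /beta -push_comp sArA push_pull alpha_e.
by rewrite -pull_comp -sCrC -comp_assoc rCsC comp_id_r.
Qed.

End ExtSplitting.

Section IdempotentCompleteness.
Variables (C : AddCat) (E : BiaddFunctor C).

Lemma splits_ext_splits (X A : Cob C) (alpha : Eobj E X A)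
    (eA : Chom A A) (eC : Chom X X) :
  ext_mor alpha alpha eA eC -> splits eA -> splits eC -> ext_splits alpha eA eC.
Proof.
move=> alpha_e [B [rA [sA [sArA rAsA]]]] [Y [rC [sC [sCrC rCsC]]]].
exists Y, B, (epush E rA (epull E sC alpha)), rA, rC, sA, sC; split=> //.
- exact: ext_mor_retraction alpha_e sArA sCrC rAsA.
- exact: ext_mor_section alpha_e sArA sCrC rCsC.
Qed.

Lemma ext_splits_splits (X A : Cob C) (alpha : Eobj E X A)
    (eA : Chom A A) (eC : Chom X X) :
  ext_splits alpha eA eC -> splits eA /\ splits eC.
Proof.
move=> [Y [B [_ [rA [rC [sA [sC [_ _ [sArA sCrC] [rAsA rCsC]]]]]]]]].
by split; [exists B, rA, sA | exists Y, rC, sC].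
Qed.

Lemma ext_idempotent_complete_of (complC : idempotent_complete C) :
  ext_idempotent_complete E.
Proof.
move=> X A alpha eA eC [alpha_e [eA_idem eC_idem]].
exact: splits_ext_splits alpha_e (complC _ _ eA_idem) (complC _ _ eC_idem).
Qed.

End IdempotentCompleteness.

Theorem proposition4p1 (C : AddCat) (E : BiaddFunctor C) :
  (forall (X A : Cob C) (alpha : Eobj E X A) (eA : Chom A A) (eC : Chom X X),
     ext_idempotent alpha eA eC ->
     ((splits eA /\ splits eC) <-> ext_splits alpha eA eC))
  /\ (idempotent_complete C -> ext_idempotent_complete E).
Proof.
split; last exact: ext_idempotent_complete_of.
move=> X A alpha eA eC [alpha_e _]; split; last exact: ext_splits_splits.
move=> [splitA splitC]; exact: splits_ext_splits alpha_e splitA splitC.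
Qed.
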